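(* For $1\le i<d$, the normalizer $\{g\in O_d(\mathbb C): gL^{(i)}=L^{(i)}\}$ of $L^{(i)}$ is equal to $N_d^{d-i}(\mathbb C)$.
   Context: Fix $d\ge2$. $V=\mathbb C^d\oplus\mathfrak{so}(d,\mathbb C)$, elements $(v,M)$ with $v=(c_1,\dots,c_d)^\top$, $M$ complex skew-symmetric, $M_{ij}=c_{ij}=-M_{ji}$ for $i<j$; $O_d(\mathbb C)=\{A:AA^\top=I\}$ acts by $A\cdot(v,M)=(Av,AMA^\top)$. $L^{(1)}=\{c_1=\dots=c_{d-1}=0\}$ and for $2\le i\le d-1$, $L^{(i)}=\{(v,M)\in L^{(i-1)}:c_{k(d-i+2)}=0,\ 1\le k\le d-i\}$. For $1\le j<d$, $N_d^{j}(\mathbb C)$ is the subgroup of $O_d(\mathbb C)$ consisting of block-diagonal matrices $\mathrm{diag}(B,\pm1,\dots,\pm1)$ with $B\in O_j(\mathbb C)$ (upper-left $j\times j$ block) and the remaining $d-j$ diagonal entries each in $\{-1,1\}$ (all other entries zero). *)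

From HB Require Import structures.
From mathcomp Require Import all_boot all_order all_algebra.
From mathcomp Require Import complex.
From mathcomp Require Import reals.
Set Implicit Arguments. Unset Strict Implicit. Unset Printing Implicit Defensive.
Import Order.TTheory GRing.Theory Num.Theory.
Local Open Scope ring_scope.

Definition is_orth (F : fieldType) (n : nat) (A : 'M[F]_n) : Prop :=
  A *m A^T = 1%:M.

(* Elements of V = C^d (+) so(d): pairs (v, M), v a column vector, M skew. *)
Definition inV (F : fieldType) (d : nat) (x : 'cV[F]_d * 'M[F]_d) : Prop :=
  x.2^T = - x.2.

Definition act (F : fieldType) (d : nat) (A : 'M[F]_d) (x : 'cV[F]_d * 'M[F]_d)
  : 'cV[F]_d * 'M[F]_d := (A *m x.1, A *m x.2 *m A^T).

(* Indices are 1-based in the paper: c_j = v (j-1), c_{kl} = M (k-1) (l-1). *)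
Definition L1cond (F : fieldType) (d : nat) (x : 'cV[F]_d * 'M[F]_d) : Prop :=
  forall j : 'I_d, (j.+1 <= d - 1)%N -> x.1 j 0 = 0.

(* the extra condition defining L^(m) inside L^(m-1), m >= 2:
   c_{k (d-m+2)} = 0 for 1 <= k <= d-m *)
Definition Lstep (F : fieldType) (d m : nat) (x : 'cV[F]_d * 'M[F]_d) : Prop :=
  forall k l : 'I_d, (1 <= k.+1 <= d - m)%N -> l.+1 = (d - m + 2)%N ->
    x.2 k l = 0.

(* Lrec d n = L^(n+1) *)
Fixpoint Lrec (F : fieldType) (d n : nat) (x : 'cV[F]_d * 'M[F]_d) : Prop :=
  match n with
  | O => inV x /\ L1cond x
  | n'.+1 => @Lrec F d n' x /\ @Lstep F d n.+1 x
  end.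

Definition Lsub (F : fieldType) (d i : nat) : 'cV[F]_d * 'M[F]_d -> Prop :=
  @Lrec F d i.-1.

Definition stabilizes (F : fieldType) (d : nat) (g : 'M[F]_d)
  (S : 'cV[F]_d * 'M[F]_d -> Prop) : Prop :=
  forall y, (exists x, S x /\ act g x = y) <-> S y.

(* N_{j+k}^{j}: block-diagonal diag(B, +-1, ..., +-1), B in O_j. *)
Definition inN (F : fieldType) (j k : nat) (g : 'M[F]_(j + k)) : Prop :=
  exists B : 'M[F]_j, is_orth B /\
  exists s : 'rV[F]_k, (forall t, s 0 t = 1 \/ s 0 t = -1) /\
    g = block_mx B 0 0 (diag_mx s).

Arguments Lsub {F} d i _.

From HB Require Import structures.
From mathcomp Require Import all_boot all_order all_algebra.
From mathcomp Require Import complex.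
From mathcomp Require Import reals.
From mathcomp Require Import zify.
Set Implicit Arguments. Unset Strict Implicit. Unset Printing Implicit Defensive.
Import GRing.Theory.
Local Open Scope ring_scope.

(* Let d = j + i. If g is orthogonal and maps L^(i) into itself, its columns
   j, ..., d-1 (0-based) are multiples of the matching basis vectors, by
   downward induction: the last one because (e_d, 0) lies in L^(i), and column
   c once column c+1 is known, because (0, E_{c,c+1} - E_{c+1,c}) lies in
   L^(i), which kills the entries of column c above the diagonal, while
   orthogonality kills those below it. By orthogonality the matching rows are
   axial as well, with diagonal entries +-1, so g lies in N_d^j. Conversely
   such a block matrix and its inverse g^T both map L^(i) into itself. *)

Section LSpaces.
Variables (F : fieldType) (d : nat).
Implicit Types (x : 'cV[F]_d * 'M[F]_d) (g : 'M[F]_d).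

Lemma LrecE n x : (n.+2 <= d)%N ->
  Lrec n x <-> [/\ inV x, L1cond x &
    forall k l : 'I_d, (d - n <= l)%N -> (k.+1 < l)%N -> x.2 k l = 0].
Proof.
elim: n => [|n IH] nd /=.
  split=> [[Vx L1x]|[Vx L1x _]]; split=> // k l; have := ltn_ord l; lia.
rewrite IH; last lia.
split=> [[[Vx L1x Mx] Sx]|[Vx L1x Mx]].
  split=> // k l dl kl; have [/Mx|ld] := leqP (d - n) l; first exact.
  by apply: Sx; lia.
by split; [split=> // k l *|move=> k l /andP[_ kd] ld]; apply: Mx; lia.
Qed.

Definition inL j x : Prop :=
  [/\ inV x, forall k : 'I_d, (k.+1 < d)%N -> x.1 k 0 = 0 &
     forall k l : 'I_d, (j < l)%N -> (k.+1 < l)%N -> x.2 k l = 0].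

Lemma Lsub_inL i x : (1 <= i < d)%N -> Lsub d i x <-> inL (d - i) x.
Proof.
move=> /andP[i_gt0 id]; rewrite /Lsub LrecE; last lia.
by split=> -[Vx vx Mx]; split=> // [k kd|k l lj kl]; rewrite ?vx ?Mx //; lia.
Qed.

Lemma stabilizes_ext g (S T : 'cV[F]_d * 'M[F]_d -> Prop) :
  (forall x, S x <-> T x) -> stabilizes g S <-> stabilizes g T.
Proof.
move=> ST; split=> gS y; [rewrite -ST -gS|rewrite ST -gS];
  by split=> -[x [Sx <-]]; exists x; split=> //; apply/ST.
Qed.

Definition diag_tail j g :=
  forall a b : 'I_d, a != b -> (j <= a)%N || (j <= b)%N -> g a b = 0.

Lemma diag_tail_tr j g : diag_tail j g -> diag_tail j g^T.
Proof. by move=> gj a b ab jab; rewrite mxE gj 1?eq_sym // orbC. Qed.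

Lemma act_inL j g x : (j < d)%N -> diag_tail j g -> inL j x -> inL j (act g x).
Proof.
move=> jd gj [Vx vx Mx]; split=> [|k kd|k l jl kl] /=.
- by rewrite /inV /= !trmx_mul trmxK Vx mulNmx mulmxN mulmxA.
- rewrite mxE big1 // => b _; have [bd|db] := ltnP b.+1 d; first by rewrite vx ?mulr0.
  by rewrite gj ?mul0r //; try (apply/orP; right); rewrite -?val_eqE /=; lia.
- rewrite mxE (bigD1 l) //= big1 => [|a al]; last first.
    by rewrite [g^T _ _]mxE gj ?mulr0 1?eq_sym //; apply/orP; left; lia.
  rewrite addr0 mxE big1 ?mul0r // => b _.
  have [bl|lb] := ltnP b.+1 l; first by rewrite Mx ?mulr0.
  by rewrite gj ?mul0r //; try (apply/orP; right); rewrite -?val_eqE /=; lia.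
Qed.

Lemma diag_tail_stabilizes j g :
  (j < d)%N -> is_orth g -> diag_tail j g -> stabilizes g (inL j).
Proof.
move=> jd g_orth gj y; split=> [[x [Lx <-]]|Ly]; first exact: act_inL.
exists (act g^T y); split; first by apply: act_inL => //; apply: diag_tail_tr.
by rewrite /act /= trmxK !mulmxA g_orth !mul1mx -mulmxA g_orth mulmx1 -surjective_pairing.
Qed.

Definition col_on_axis g (c : 'I_d) := forall a, a != c -> g a c = 0.

Lemma mulTmx_col_on_axis g c b : col_on_axis g c -> (g^T *m g) b c = g c b * g c c.
Proof. by move=> gc; rewrite mxE (bigD1 c) //= big1 ?addr0 ?mxE // => a /gc->; rewrite mulr0. Qed.

Lemma orth_col_on_axis_sqr g c : g^T *m g = 1%:M -> col_on_axis g c -> g c c ^+ 2 = 1.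
Proof. by move=> gTg gc; rewrite expr2 -mulTmx_col_on_axis // gTg mxE eqxx. Qed.

Lemma orth_col_on_axis_neq0 g c : g^T *m g = 1%:M -> col_on_axis g c -> g c c != 0.
Proof.
move=> gTg gc; apply/eqP=> gcc0.
by have := orth_col_on_axis_sqr gTg gc; rewrite gcc0 expr0n => /eqP; rewrite eq_sym oner_eq0.
Qed.

Lemma orth_col_on_axis_row g c :
  g^T *m g = 1%:M -> col_on_axis g c -> forall b, b != c -> g c b = 0.
Proof.
move=> gTg gc b bc; have /eqP := mulTmx_col_on_axis b gc.
rewrite gTg mxE (negbTE bc) mulr0n eq_sym mulf_eq0.
by rewrite (negbTE (orth_col_on_axis_neq0 gTg gc)) orbF => /eqP.
Qed.

Lemma mul_delta_mxE m n p (A : 'M[F]_(m, n)) (B : 'M[F]_(n, p)) q r a b :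
  (A *m delta_mx q r *m B) a b = A a q * B r b.
Proof.
rewrite mxE (bigD1 r) //= big1 ?addr0 => [|k /negbTE kr]; last first.
  by rewrite mxE big1 ?mul0r // => l _; rewrite mxE kr andbF mulr0.
rewrite mxE (bigD1 q) //= big1 ?addr0 => [|l /negbTE lq]; last by rewrite mxE lq mulr0.
by rewrite mxE !eqxx mulr1.
Qed.

Section Stabilizer.
Variables (j : nat) (g : 'M[F]_d).
Hypotheses (gTg : g^T *m g = 1%:M) (g_inL : forall x, inL j x -> inL j (act g x)).

Lemma last_col_on_axis (c : 'I_d) : c.+1 = d -> col_on_axis g c.
Proof.
move=> cd a ac; pose x : 'cV[F]_d * 'M[F]_d := (delta_mx c 0, 0).
have Lx : inL j x.
  split=> [|k kd|k l _ _] /=; rewrite ?mxE //; first by rewrite /inV trmx0 oppr0.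
  by rewrite (_ : k == c = false) //; apply/eqP=> kc; move: kd; rewrite kc; lia.
have [_ gx0 _] := g_inL Lx.
have ad : (a.+1 < d)%N by have := ltn_ord a; move: ac; rewrite -val_eqE /=; lia.
by move: (gx0 a ad); rewrite /act /= -colE mxE.
Qed.

(* [E_{c,c+1} - E_{c+1,c}] lies in [inL j], and the [(a, c+1)] entry of its
   image under [g] is [g a c * g (c+1) (c+1)]. *)
Lemma col_on_axis_above (c c1 : 'I_d) : (j <= c)%N -> c1 = c.+1 :> nat ->
  col_on_axis g c1 -> forall a : 'I_d, (a < c)%N -> g a c = 0.
Proof.
move=> jc c1E gc1 a ac.
pose x : 'cV[F]_d * 'M[F]_d := (0, delta_mx c c1 - delta_mx c1 c).
have Lx : inL j x.
  split=> [|k _|k l _ kl] /=; rewrite ?mxE //.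
    by rewrite /inV /= linearB /= !trmx_delta opprB.
  have -> : (k == c) && (l == c1) = false.
    by apply/andP=> -[/eqP kc /eqP lc1]; move: kl; rewrite kc lc1 c1E ltnn.
  have -> : (k == c1) && (l == c) = false.
    by apply/andP=> -[/eqP kc1 /eqP lc]; move: kl; rewrite kc1 lc c1E; lia.
  by rewrite subrr.
have jc1 : (j < c1)%N by rewrite c1E ltnS.
have ac1 : (a.+1 < c1)%N by rewrite c1E ltnS.
have [_ _ /(_ a c1 jc1 ac1)] := g_inL Lx.
rewrite /act /= mulmxBr mulmxBl mxE [in X in _ + X]mxE !mul_delta_mxE !mxE.
rewrite (gc1 a) ?mul0r ?subr0; last by rewrite -val_eqE /= c1E neq_ltn ltnS ltnW.
move/eqP; rewrite mulf_eq0 (negbTE (orth_col_on_axis_neq0 gTg gc1)) orbF.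
by move/eqP.
Qed.

Lemma col_on_axis_step (c : 'I_d) : (j <= c)%N ->
  (forall c' : 'I_d, (c < c')%N -> col_on_axis g c') -> col_on_axis g c.
Proof.
move=> jc gc'; have [cd|] := ltnP c.+1 d; last first.
  by move=> dc; apply: last_col_on_axis; have := ltn_ord c; lia.
move=> a; case: (ltngtP a c) => [ac _|ca _|/val_inj->]; last by rewrite eqxx.
  by apply: (col_on_axis_above (c1 := Ordinal cd)) => //; apply: gc' => /=.
by apply: orth_col_on_axis_row gTg (gc' a ca) _ _; rewrite -val_eqE /= ltn_eqF.
Qed.

Lemma inL_preserved_diag_tail : diag_tail j g.
Proof.
have cols (c : 'I_d) : (j <= c)%N -> col_on_axis g c.
  suff cols_k k : forall c' : 'I_d, (d <= c' + k)%N -> (j <= c')%N -> col_on_axis g c'.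
    by apply: (cols_k d); rewrite leq_addl.
  elim: k => [|k IH] c' dc jc; first by have := ltn_ord c'; lia.
  by apply: col_on_axis_step => // c'' cc'; apply: IH; lia.
move=> a b ab /orP[ja|jb]; last exact: cols.
by apply: orth_col_on_axis_row gTg (cols a ja) _ _; rewrite eq_sym.
Qed.

End Stabilizer.
End LSpaces.

Section Blocks.
Variables (F : fieldType) (j i : nat).

Lemma is_orth_block (B : 'M[F]_j) (s : 'rV[F]_i) :
  is_orth (block_mx B 0 0 (diag_mx s)) <-> is_orth B /\ forall t, s 0 t ^+ 2 = 1.
Proof.
rewrite /is_orth tr_block_mx mulmx_block !trmx0 !mul0mx !mulmx0 !addr0 !add0r.
rewrite tr_diag_mx mulmx_diag (scalar_mx_block j i).
split=> [/eq_block_mx[-> _ _ ss]|[-> ss]].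
  by split=> // t; move/matrixP/(_ t t): ss; rewrite !mxE eqxx !mulr1n expr2.
by congr block_mx; apply/matrixP=> a b; rewrite !mxE -expr2 ss.
Qed.

Lemma block_diag_tail (B : 'M[F]_j) (s : 'rV[F]_i) :
  diag_tail j (block_mx B 0 0 (diag_mx s)).
Proof.
move=> a b; case: (split_ordP a) => a' ->; case: (split_ordP b) => b' -> ab jab.
- by exfalso; move: jab; rewrite /= !(leqNgt j) !ltn_ord.
- by rewrite block_mxEur mxE.
- by rewrite block_mxEdl mxE.
by rewrite (inj_eq (@rshift_inj _ _)) in ab; rewrite block_mxEdr mxE (negbTE ab) mulr0n.
Qed.

Lemma diag_tail_blockE (g : 'M[F]_(j + i)) : diag_tail j g ->
  g = block_mx (ulsubmx g) 0 0 (diag_mx (\row_t g (rshift j t) (rshift j t))).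
Proof.
move=> gj; rewrite -{1}(submxK g); congr block_mx; apply/matrixP=> a b; rewrite !mxE.
- by apply: gj; rewrite ?eq_shift //= leq_addr orbT.
- by apply: gj; rewrite 1?eq_sym ?eq_shift //= leq_addr.
case: eqVneq => [->|ab]; first by rewrite mulr1n.
by rewrite mulr0n; apply: gj; rewrite ?(inj_eq (@rshift_inj _ _)) //= leq_addr.
Qed.

Lemma inN_iff_orth_diag_tail (g : 'M[F]_(j + i)) :
  inN g <-> is_orth g /\ diag_tail j g.
Proof.
split=> [[B [B_orth [s [s_sign ->]]]]|[g_orth gj]].
  split; last exact: block_diag_tail.
  by apply/is_orth_block; split=> // t; case: (s_sign t) => ->; rewrite ?sqrrN expr1n.
have g_blk := diag_tail_blockE gj.
move: g_orth; rewrite {1}g_blk => /is_orth_block[B_orth s_sq].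
exists (ulsubmx g); split=> //; exists (\row_t g (rshift j t) (rshift j t)).
split=> // t.
by have /eqP := s_sq t; rewrite sqrf_eq1 => /orP[/eqP|/eqP]; [left|right].
Qed.

End Blocks.

Theorem proposition3p5 (R : realType) (j i : nat) (hi : (1 <= i)%N) (hj : (1 <= j)%N)
  (g : 'M[complex R]_(j + i)) :
  (is_orth g /\ stabilizes g (Lsub (j + i) i)) <-> inN g.
Proof.
have jd : (j < j + i)%N by lia.
have L_inL (x : 'cV[complex R]_(j + i) * 'M_(j + i)) : Lsub (j + i) i x <-> inL j x.
  by rewrite Lsub_inL ?addnK //; lia.
rewrite (stabilizes_ext g L_inL) inN_iff_orth_diag_tail.
split=> [[g_orth g_stab]|[g_orth g_tail]]; split=> //.
  apply: inL_preserved_diag_tail (mulmx1C g_orth) _ => x Lx.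
  by apply/g_stab; exists x.
exact: diag_tail_stabilizes.
Qed.
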